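(* Let $w_r \ge w_c \ge 2$ be integers and let $H_{\mathrm{reg}}$ be the bipartite graph constructed from $(w_c,w_r)$ as described in the context. Then the girth of $H_{\mathrm{reg}}$ is $8$, and the binary linear code whose parity-check matrix is the check-node-by-variable-node incidence matrix of $H_{\mathrm{reg}}$ has minimum distance $d_{\min} = 2^{w_c}$.
   Context: The graph $H_{\mathrm{reg}}$ is a bipartite graph between ''variable nodes'' and ''check nodes'', built as follows from integers $w_r \ge w_c \ge 2$. (1) Base tree $H_{\mathrm{base}}$: a root check node is adjacent to $w_r$ variable nodes $v_{1,0},\dots,v_{w_r,0}$. Each $v_{i,0}$ has $w_c-1$ further (child) check nodes, and each of these child check nodes has $w_r-1$ further (child) variable nodes. The $(w_c-1)(w_r-1)$ variable nodes below $v_{i,0}$ are labelled $v_{i,1},\dots,v_{i,(w_c-1)(w_r-1)}$, where for $k=1,\dots,w_c-1$ the nodes $v_{i,(k-1)(w_r-1)+1},\dots,v_{i,k(w_r-1)}$ are the children of the $k$-th child check node of $v_{i,0}$. These nodes $v_{i,j}$ with $j\ge 1$ are called last-layer variable nodes. (2) For each $j=1,\dots,(w_c-1)(w_r-1)$ add a new check node $c_j$ adjacent to $v_{1,j},v_{2,j},\dots,v_{w_r,j}$. Call the resulting graph $G_0$. (3) If $w_c \ge 3$, for $s=1,\dots,w_c-2$: let $G_s$ consist of $w_r$ disjoint copies of $G_{s-1}$, together with, for every last-layer variable node $u$ of $G_{s-1}$ (i.e. every variable node of $G_{s-1}$ coming from a last-layer variable node of some copy of $H_{\mathrm{base}}$),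 one new check node adjacent to the $w_r$ copies of $u$. Finally $H_{\mathrm{reg}} = G_{w_c-2}$. The girth of a graph is the length of its shortest cycle. The code associated with $H_{\mathrm{reg}}$ is the set of binary vectors indexed by variable nodes whose support meets every check node's neighbourhood in an even number of vertices; $d_{\min}$ is the minimum Hamming weight of a nonzero codeword. *)

From mathcomp Require Import all_boot.
Set Implicit Arguments. Unset Strict Implicit. Unset Printing Implicit Defensive.

(* Indices are 0-based:
   - variable v_{i,j} of H_base is (i, j) with i : 'I_wr, j : 'I_(L+1),
     L = (wc-1)(wr-1); j = 0 is v_{i,0}, j >= 1 last-layer.
   - checks of H_base: root (inl (inl tt)); the k-th child check of v_{i,0}
     (inl (inr (i,k))), k : 'I_(wc-1) (0-based block index);
   - the added checks c_j of G_0: inr n, n : 'I_L, standing for c_{n+1}.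
   - G_{s+1}: variables 'I_wr * V(G_s) (copy x of variable u); checks are
     copies (inl (x, c)) of checks of G_s, and one new check (inr u) for every
     last-layer variable u of G_s, adjacent to the wr copies of u. *)

Definition Lsz (wc wr : nat) : nat := (wc.-1 * wr.-1)%N.

Fixpoint Vt (wc wr : nat) (s : nat) : finType :=
  match s with
  | 0 => ('I_wr * 'I_(Lsz wc wr).+1)%type
  | s'.+1 => ('I_wr * Vt wc wr s')%type
  end.

Fixpoint lastv (wc wr : nat) (s : nat) : Vt wc wr s -> bool :=
  match s return Vt wc wr s -> bool with
  | 0 => fun u => (u.2 != ord0)
  | s'.+1 => fun u => lastv u.2
  end.

Definition Cbase (wc wr : nat) : finType :=
  (unit + ('I_wr * 'I_wc.-1) + 'I_(Lsz wc wr))%type.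

Fixpoint Ct (wc wr : nat) (s : nat) : finType :=
  match s with
  | 0 => Cbase wc wr
  | s'.+1 => ('I_wr * Ct wc wr s' + {u : Vt wc wr s' | lastv u})%type
  end.

Definition adj0 (wc wr : nat) (c : Cbase wc wr) (v : Vt wc wr 0) : bool :=
  match c with
  | inl (inl tt) => (v.2 == 0 :> nat)
  | inl (inr (i, k)) =>
      (v.1 == i) && ((v.2 == 0 :> nat) || ((v.2.-1 %/ wr.-1)%N == k :> nat))
  | inr n => (v.2 == n.+1 :> nat)
  end.

Fixpoint adj (wc wr : nat) (s : nat) : Ct wc wr s -> Vt wc wr s -> bool :=
  match s return Ct wc wr s -> Vt wc wr s -> bool with
  | 0 => fun c v => adj0 c v
  | s'.+1 => fun c v =>
      match c with
      | inl (x, c') => (v.1 == x) && adj c' v.2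
      | inr u => (sval u == v.2)
      end
  end.

Definition Hvar (wc wr : nat) : finType := Vt wc wr (wc - 2).
Definition Hchk (wc wr : nat) : finType := Ct wc wr (wc - 2).
Definition Hadj (wc wr : nat) : Hchk wc wr -> Hvar wc wr -> bool :=
  @adj wc wr (wc - 2).

Definition Hnode (wc wr : nat) : finType := (Hvar wc wr + Hchk wc wr)%type.
Definition Hedge (wc wr : nat) : rel (Hnode wc wr) :=
  fun a b => match a, b with
             | inl v, inr c => Hadj c v
             | inr c, inl v => Hadj c v
             | _, _ => false
             end.

Definition is_cycle (T : eqType) (e : rel T) (p : seq T) : bool :=
  [&& 3 <= size p, uniq p & cycle e p].

Definition girth_is (T : eqType) (e : rel T) (g : nat) : Prop :=
  (exists p, is_cycle e p /\ size p = g) /\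
  (forall p, is_cycle e p -> g <= size p).

Definition is_codeword (V C : finType) (a : C -> V -> bool) (S : {set V}) : Prop :=
  forall c : C, ~~ odd #|[set v in S | a c v]|.

Definition dmin_is (V C : finType) (a : C -> V -> bool) (d : nat) : Prop :=
  (exists S : {set V}, is_codeword a S /\ S != set0 /\ #|S| = d) /\
  (forall S : {set V}, is_codeword a S -> S != set0 -> d <= #|S|).

From mathcomp Require Import all_boot zify.
Set Implicit Arguments. Unset Strict Implicit. Unset Printing Implicit Defensive.

(* Tanner graphs are bipartite, so their cycles are even and girth 8 amounts to
   the absence of 4- and 6-cycles plus one 8-cycle.  In G_(s+1) an old check stays inside one copy and a new check
   only joins the copies of a single variable, so a short cycle either lies in
   one copy of G_s or has to revisit a node.  The 8-cycle
   v_(1,0), root, v_(2,0), child, v_(2,1), c_1, v_(1,1), child lies in H_base,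
   hence in every copy.

   A nonempty codeword of G_0 contains a last-layer variable v_(i,j) (a child
   check cannot see v_(i,0) alone); its partner on c_j and the partners of both
   on their child checks give weight at least 4.  A nonempty codeword of
   G_(s+1) restricts to codewords of the copies, and the new check of a
   last-layer variable in its support forces a second nonempty copy, so the
   lower bound doubles at each level.  Conversely, two variables below the same
   child check, taken in two branches, form a codeword of weight 4 of G_0, and
   taking a codeword in two copies doubles its weight: 2 ^ (s + 2) in G_s,
   i.e. 2 ^ w_c in H_reg = G_(w_c - 2). *)

Lemma eq_inl (A B : eqType) (x y : A) : (inl x == inl y :> A + B) = (x == y).
Proof. by []. Qed.

Lemma eq_inr (A B : eqType) (x y : B) : (inr x == inr y :> A + B) = (x == y).
Proof. by []. Qed.

Lemma eq_ordE n (i j : 'I_n) : (i == j) = (i == j :> nat). Proof. by []. Qed.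

Lemma even_card_setId (T : finType) (J : {set T}) (P : pred T) :
  ~~ odd #|J| -> {in J &, forall j j', P j = P j'} -> ~~ odd #|[set j in J | P j]|.
Proof.
move=> evenJ PJ; have [J0|[j0 j0J]] := set_0Vmem J.
  by rewrite (_ : [set j in J | P j] = set0) ?cards0 //; apply/setP => j; rewrite J0 !inE.
have -> : [set j in J | P j] = if P j0 then J else set0.
  apply/setP => j; rewrite inE; case jJ: (j \in J) => /=; last by case: ifP; rewrite ?inE ?jJ.
  by rewrite (PJ j j0) //; case: ifP; rewrite ?inE ?jJ.
by case: ifP; rewrite ?cards0.
Qed.

Lemma ord_set_card2 n : 1 < n -> exists A : {set 'I_n}, #|A| = 2.
Proof. by move=> n_gt1; exists [set Ordinal (ltnW n_gt1); Ordinal n_gt1]; rewrite cards2. Qed.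

Section TannerGraph.

Variables (V C : finType) (a : C -> V -> bool).

Definition tanner_edge : rel (V + C) :=
  fun x y => match x, y with
             | inl v, inr c | inr c, inl v => a c v
             | _, _ => false
             end.

Definition no_4cycle : Prop :=
  forall c c' v v', c != c' -> v != v' -> a c v -> a c v' -> a c' v -> a c' v' -> False.

Definition no_6cycle : Prop :=
  forall c1 c2 c3 v1 v2 v3, c1 != c2 -> c2 != c3 -> c1 != c3 ->
    v1 != v2 -> v2 != v3 -> v1 != v3 ->
    a c1 v1 -> a c1 v2 -> a c2 v2 -> a c2 v3 -> a c3 v3 -> a c3 v1 -> False.

Definition has_8cycle : Prop :=
  exists (v1 v2 v3 v4 : V) (c1 c2 c3 c4 : C),
    [&& uniq [:: v1; v2; v3; v4], uniq [:: c1; c2; c3; c4],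
        a c1 v1, a c1 v2, a c2 v2, a c2 v3, a c3 v3, a c3 v4, a c4 v4 & a c4 v1].

Definition is_var (x : V + C) : bool := if x is inl _ then true else false.

Lemma tanner_path_side x p :
  path tanner_edge x p -> is_var (last x p) = odd (size p) (+) is_var x.
Proof.
elim: p x => [|y p IH] [v|c] //=;
  by case: y => [w|d] //= /andP[_ /IH ->]; case: odd.
Qed.

Lemma tanner_cycle_even p : cycle tanner_edge p -> ~~ odd (size p).
Proof.
case: p => [//|x p] /tanner_path_side.
by rewrite last_rcons size_rcons /=; case: odd; case: is_var.
Qed.

Lemma tanner_cycle_ge8 p :
  no_4cycle -> no_6cycle -> is_cycle tanner_edge p -> 8 <= size p.
Proof.
move=> h4 h6 /and3P[p3 up cp]; have ev := tanner_cycle_even cp; move: ev p3 up cp.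
case: p => [|x1 [|x2 [|x3 [|x4 [|x5 [|x6 [|x7 [|x8 p]]]]]]]] //= _ _.
- case: x1 x2 x3 x4 => [v1|c1] [v2|c2] [v3|c3] [v4|c4];
    rewrite /= !inE /= !negb_or ?andbF ?andbT // => /andP[ne ne'] /and4P[a1 a2 a3 a4].
  + by case: (h4 c2 c4 v1 v3 ne' ne a1 a2 a4 a3).
  + by case: (h4 c1 c3 v2 v4 ne ne' a1 a4 a2 a3).
- case: x1 x2 x3 x4 x5 x6 => [v1|c1] [v2|c2] [v3|c3] [v4|c4] [v5|c5] [v6|c6];
    rewrite /= !inE /= !negb_or ?andbF ?andbT //.
  all: move=> /and4P[/andP[n13 n15] /andP[n24 n26] n35 n46].
  all: move=> /and5P[a1 a2 a3 a4 /andP[a5 a6]].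
  + by case: (h6 c2 c4 c6 v1 v3 v5 n24 n46 n26 n13 n35 n15 a1 a2 a3 a4 a5 a6).
  + rewrite eq_sym in n26; rewrite eq_sym in n46.
    by case: (h6 c1 c3 c5 v6 v2 v4 n13 n35 n15 n26 n24 n46 a6 a1 a2 a3 a4 a5).
Qed.

Lemma tanner_8cycle : has_8cycle -> exists p, is_cycle tanner_edge p /\ size p = 8.
Proof.
move=> [v1 [v2 [v3 [v4 [c1 [c2 [c3 [c4 h]]]]]]]].
move: h => /and5P[uv uc a11 a12 /and4P[a22 a23 a33 /and3P[a34 a44 a41]]].
exists [:: inl v1; inr c1; inl v2; inr c2; inl v3; inr c3; inl v4; inr c4]; split => //.
move: uv uc; rewrite /is_cycle /= !inE /= !negb_or.
move=> /and4P[/and3P[-> -> ->] /andP[-> ->] -> _] /and4P[/and3P[-> -> ->] /andP[-> ->] -> _].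
by rewrite a11 a12 a22 a23 a33 a34 a44 a41.
Qed.

Lemma tanner_girth8 : no_4cycle -> no_6cycle -> has_8cycle -> girth_is tanner_edge 8.
Proof.
move=> h4 h6 h8; split; first exact: tanner_8cycle.
by move=> p; apply: tanner_cycle_ge8.
Qed.

Lemma codeword_mate S c x : is_codeword a S -> x \in S -> a c x ->
  exists y, [/\ y \in S, a c y & y != x].
Proof.
move=> hS xS acx; move: (hS c); rewrite (cardsD1 x) inE xS acx /=.
have [->|[y]] := set_0Vmem ([set v in S | a c v] :\ x); first by rewrite cards0.
by rewrite !inE => /and3P[yx yS acy] _; exists y.
Qed.

End TannerGraph.

(* Closes the finite case analyses on checks below: adjacency hypotheses are
   conjunctions of equations and of disjunctions of equations, and the
   disjunctions are split only when congruence alone does not conclude. *)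
Ltac bool_hyps_to_eqs := repeat match goal with
  | H : is_true (_ && _) |- _ =>
      let H1 := fresh "h" in let H2 := fresh "h" in case/andP: H => H1 H2
  | H : is_true (~~ (_ && _)) |- _ => rewrite negb_and in H
  | H : is_true (_ == _) |- _ => let H1 := fresh "h" in move/eqP: H => H1
  | H : is_true (_ != _) |- _ => let H1 := fresh "h" in move/eqP: H => H1
  end.

Ltac congruence_by_cases := first
  [ congruence
  | match goal with H : is_true (_ || _) |- _ =>
      let H1 := fresh "h" in
      case/orP: H => H1; bool_hyps_to_eqs; congruence_by_cases end ].

Section Hreg.

Variables wc wr : nat.
Hypotheses (wc_gt1 : 1 < wc) (wr_gt1 : 1 < wr).
Local Notation adj_ s := (@adj wc wr s).

Lemma wc_pred_gt0 : 0 < wc.-1. Proof. by rewrite -subn1 subn_gt0. Qed.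

Lemma wr_pred_gt0 : 0 < wr.-1. Proof. by rewrite -subn1 subn_gt0. Qed.

Lemma Lsz_gt0 : 0 < Lsz wc wr. Proof. by rewrite muln_gt0 wc_pred_gt0 wr_pred_gt0. Qed.

Lemma adj0_no_4cycle : no_4cycle (adj_ 0).
Proof.
move=> c c' [i j] [i' j'].
case: c => [[[]|[k l]]|n]; case: c' => [[[]|[k' l']]|n'] /=;
  rewrite ?eq_inl ?eq_inr ?xpair_eqE ?eq_ordE.
all: move=> *; bool_hyps_to_eqs; congruence_by_cases.
Qed.

Lemma adj0_no_6cycle : no_6cycle (adj_ 0).
Proof.
move=> c1 c2 c3 [i1 j1] [i2 j2] [i3 j3].
case: c1 => [[[]|[k1 l1]]|n1]; case: c2 => [[[]|[k2 l2]]|n2];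
  case: c3 => [[[]|[k3 l3]]|n3] /=; rewrite ?eq_inl ?eq_inr ?xpair_eqE ?eq_ordE.
all: move=> *; bool_hyps_to_eqs; congruence_by_cases.
Qed.

Lemma adjS_no_4cycle s : no_4cycle (adj_ s) -> no_4cycle (adj_ s.+1).
Proof.
move=> IH c c' [y v] [y' v'].
case: c => [[x c]|u]; case: c' => [[x' c']|u'] /=; rewrite ?eq_inl ?eq_inr ?xpair_eqE.
- move=> + + /andP[/eqP e1 a1] /andP[/eqP e2 a2] /andP[/eqP e3 a3] /andP[/eqP e4 a4]; subst.
  rewrite !eqxx /= => hc hv; exact: IH hc hv a1 a2 a3 a4.
all: rewrite -?(inj_eq val_inj) /= => *; bool_hyps_to_eqs; congruence_by_cases.
Qed.

Lemma adjS_no_6cycle s : no_6cycle (adj_ s) -> no_6cycle (adj_ s.+1).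
Proof.
move=> IH c1 c2 c3 [y1 v1] [y2 v2] [y3 v3].
case: c1 => [[x1 c1]|u1]; case: c2 => [[x2 c2]|u2]; case: c3 => [[x3 c3]|u3] /=;
  rewrite ?eq_inl ?eq_inr ?xpair_eqE.
- move=> + + + + + + /andP[/eqP e1 a1] /andP[/eqP e2 a2] /andP[/eqP e3 a3]
    /andP[/eqP e4 a4] /andP[/eqP e5 a5] /andP[/eqP e6 a6]; subst.
  rewrite !eqxx /= => h12 h23 h13 g12 g23 g13.
  exact: IH h12 h23 h13 g12 g23 g13 a1 a2 a3 a4 a5 a6.
all: rewrite -?(inj_eq val_inj) /= => *; bool_hyps_to_eqs; congruence_by_cases.
Qed.

Lemma adj_no_4cycle s : no_4cycle (adj_ s).
Proof. by elim: s => [|s]; [exact: adj0_no_4cycle | exact: adjS_no_4cycle]. Qed.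

Lemma adj_no_6cycle s : no_6cycle (adj_ s).
Proof. by elim: s => [|s]; [exact: adj0_no_6cycle | exact: adjS_no_6cycle]. Qed.

Lemma adj0_has_8cycle : has_8cycle (adj_ 0).
Proof.
pose i0 : 'I_wr := Ordinal (ltnW wr_gt1).
pose i1 : 'I_wr := Ordinal wr_gt1.
pose j1 : 'I_(Lsz wc wr).+1 := Ordinal (Lsz_gt0 : 1 < (Lsz wc wr).+1).
pose child i : Cbase wc wr := inl (inr (i, Ordinal wc_pred_gt0)).
exists (i0, ord0), (i1, ord0), (i1, j1), (i0, j1).
exists (inl (inl tt)), (child i1), (inr (Ordinal Lsz_gt0)), (child i0).
by rewrite /= div0n.
Qed.

Lemma adjS_has_8cycle s : has_8cycle (adj_ s) -> has_8cycle (adj_ s.+1).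
Proof.
move=> [v1 [v2 [v3 [v4 [c1 [c2 [c3 [c4 h]]]]]]]].
pose x : 'I_wr := Ordinal (ltnW wr_gt1).
exists (x, v1), (x, v2), (x, v3), (x, v4).
exists (inl (x, c1)), (inl (x, c2)), (inl (x, c3)), (inl (x, c4)).
by move: h; rewrite /= !inE !xpair_eqE !eq_inl !xpair_eqE !eqxx.
Qed.

Lemma adj_has_8cycle s : has_8cycle (adj_ s).
Proof. by elim: s => [|s]; [exact: adj0_has_8cycle | exact: adjS_has_8cycle]. Qed.

Definition slice s (S : {set Vt wc wr s.+1}) (x : 'I_wr) : {set Vt wc wr s} :=
  [set v | (x, v) \in S].

Lemma card_slice s (S : {set Vt wc wr s.+1}) x (P : pred (Vt wc wr s)) :
  #|[set v in slice S x | P v]| = #|[set w in S | (w.1 == x) && P w.2]|.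
Proof.
have -> : [set w in S | (w.1 == x) && P w.2] = setX [set x] [set v in slice S x | P v].
  by apply/setP => [[y v]]; rewrite !inE /=; case: eqP => [->|]; rewrite ?andbF.
by rewrite cardsX cards1 mul1n.
Qed.

Lemma slice_codeword s (S : {set Vt wc wr s.+1}) x :
  is_codeword (adj_ s.+1) S -> is_codeword (adj_ s) (slice S x).
Proof. by move=> hS c; rewrite card_slice; exact: (hS (inl (x, c))). Qed.

Lemma card_two_slices s (S : {set Vt wc wr s.+1}) x x' : x != x' ->
  #|slice S x| + #|slice S x'| <= #|S|.
Proof.
move=> xx'.
have cardE z : #|slice S z| = #|[set w in S | (w.1 == z) && predT w.2]|.
  by rewrite -card_slice; apply: eq_card => v; rewrite !inE andbT.
rewrite !cardE -cardsUI.
have -> : [set w in S | (w.1 == x) && predT w.2] :&: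
          [set w in S | (w.1 == x') && predT w.2] = set0.
  apply/setP => w; rewrite !inE.
  by case: (w.1 =P x) => [->|]; rewrite ?(negbTE xx') /= ?andbF.
rewrite cards0 addn0; apply: subset_leq_card; apply/subsetP => w.
by rewrite !inE => /orP[] /andP[].
Qed.

Lemma codeword0_has_lastv S : is_codeword (adj_ 0) S -> S != set0 ->
  exists2 u, u \in S & lastv u.
Proof.
move=> hS /set0Pn [[i j] ijS].
have [j0|nz_j] := eqVneq (j : nat) 0; last by exists (i, j).
have [|[i' j'] [ijS' + ne]] :=
  codeword_mate (c := inl (inr (i, Ordinal wc_pred_gt0))) hS ijS.
  by rewrite /= j0 eqxx.
move=> /andP[/eqP /= ii' _]; subst i'; exists (i, j') => //=.
by apply: contra ne => /eqP j'0; rewrite xpair_eqE eqxx eq_ordE j0 j'0.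
Qed.

Lemma codeword_has_lastv s S : is_codeword (adj_ s) S -> S != set0 ->
  exists2 u, u \in S & lastv u.
Proof.
elim: s S => [|s IH] S hS; first exact: codeword0_has_lastv.
case/set0Pn => [[x u] xuS].
have [|v vS lv] := IH _ (slice_codeword x hS); first by apply/set0Pn; exists u; rewrite inE.
by exists (x, v); first by rewrite inE in vS.
Qed.

Lemma codeword0_card_ge4 S : is_codeword (adj_ 0) S -> S != set0 -> 4 <= #|S|.
Proof.
move=> hS /(codeword0_has_lastv hS) [[i j] ijS lj].
have j_gt0 : 0 < j by rewrite lt0n; exact: lj.
have hn : j.-1 < Lsz wc wr by rewrite -ltnS prednK.
have hk : j.-1 %/ wr.-1 < wc.-1.
  by rewrite ltn_divLR; [exact: hn | exact: wr_pred_gt0].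
have [|[i' j'] [i'S]] := codeword_mate (c := inr (Ordinal hn)) hS ijS.
  by rewrite /= prednK.
rewrite /= prednK // => /eqP/val_inj j'j ne'; subst j'.
have ii' : i != i' by apply: contra ne' => /eqP->.
have [|[ia ja] [aS /andP[/eqP /= ia_i _] nea]] :=
  codeword_mate (c := inl (inr (i, Ordinal hk))) hS ijS.
  by rewrite /= !eqxx ?orbT.
have jaj : j != ja by apply: contra nea; rewrite ia_i => /eqP->.
have [|[ib jb] [bS /andP[/eqP /= ib_i' _] neb]] :=
  codeword_mate (c := inl (inr (i', Ordinal hk))) hS i'S.
  by rewrite /= !eqxx ?orbT.
have jbj : j != jb by apply: contra neb; rewrite ib_i' => /eqP->.
rewrite cardE (uniq_leq_size (s1 := [:: (i, j); (i', j); (ia, ja); (ib, jb)])) //.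
  rewrite ia_i ib_i' /= !inE !xpair_eqE !eqxx (eq_sym i') (negbTE ii').
  by rewrite (negbTE jaj) (negbTE jbj) /= ?andbF.
by move=> w; rewrite mem_enum !inE => /or4P[] /eqP->.
Qed.

Lemma codeword_two_slices s S : is_codeword (adj_ s.+1) S -> S != set0 ->
  exists x x', [/\ x != x', slice S x != set0 & slice S x' != set0].
Proof.
move=> hS /set0Pn [[x u] xuS].
have [|v vS lv] := codeword_has_lastv (slice_codeword x hS).
  by apply/set0Pn; exists u; rewrite inE.
rewrite inE in vS.
have [|[x' v'] [x'S /eqP /= v'v]] := codeword_mate (c := inr (exist _ v lv)) hS vS.
  by rewrite /= eqxx.
subst v'; rewrite xpair_eqE eqxx andbT => x'x.
exists x, x'; split; first by rewrite eq_sym.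
all: by apply/set0Pn; exists v; rewrite inE.
Qed.

Lemma codeword_card_ge_exp s S : is_codeword (adj_ s) S -> S != set0 -> 2 ^ s.+2 <= #|S|.
Proof.
elim: s S => [|s IH] S hS S0; first exact: codeword0_card_ge4.
have [x [x' [xx' Sx Sx']]] := codeword_two_slices hS S0.
apply: leq_trans (card_two_slices S xx').
rewrite expnS mul2n -addnn.
by apply: leq_add; apply: IH => //; exact: slice_codeword.
Qed.

Lemma codeword_setX s (A : {set 'I_wr}) (W : {set Vt wc wr s}) :
  ~~ odd #|A| -> is_codeword (adj_ s) W -> is_codeword (adj_ s.+1) (setX A W).
Proof.
move=> hA hW [[x c]|u].
- have -> : [set w in setX A W | adj_ s.+1 (inl (x, c)) w] =
            setX [set y in A | y == x] [set v in W | adj c v].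
    by apply/setP => [[y v]]; rewrite !inE /= andbACA.
  by rewrite cardsX oddM (negbTE (hW c)) andbF.
- have -> : [set w in setX A W | adj_ s.+1 (inr u) w] =
            setX A [set v in W | sval u == v].
    by apply/setP => [[y v]]; rewrite !inE /= andbA.
  by rewrite cardsX oddM (negbTE hA).
Qed.

Lemma codeword0_setX (A : {set 'I_wr}) (J : {set 'I_(Lsz wc wr).+1}) :
  ~~ odd #|A| -> ~~ odd #|J| ->
  (forall k : 'I_wc.-1, {in J &, forall j j' : 'I_(Lsz wc wr).+1,
     (j == 0 :> nat) || (j.-1 %/ wr.-1 == k) = (j' == 0 :> nat) || (j'.-1 %/ wr.-1 == k)}) ->
  is_codeword (adj_ 0) (setX A J).
Proof.
move=> hA hJ Jk [[[]|[i k]]|n].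
- have -> : [set w in setX A J | adj_ 0 (inl (inl tt)) w] =
            setX A [set j in J | j == 0 :> nat].
    by apply/setP => [[y j]]; rewrite !inE /= andbA.
  by rewrite cardsX oddM (negbTE hA).
- have -> : [set w in setX A J | adj_ 0 (inl (inr (i, k))) w] =
            setX [set y in A | y == i] [set j in J | (j == 0 :> nat) || (j.-1 %/ wr.-1 == k)].
    by apply/setP => [[y j]]; rewrite !inE /= andbACA.
  by rewrite cardsX oddM (negbTE (even_card_setId hJ (Jk k))) andbF.
- have -> : [set w in setX A J | adj_ 0 (inr n) w] =
            setX A [set j in J | j == n.+1 :> nat].
    by apply/setP => [[y j]]; rewrite !inE /= andbA.
  by rewrite cardsX oddM (negbTE hA).
Qed.

Lemma exists_codeword0_card4 : wc <= wr ->
  exists W, is_codeword (adj_ 0) W /\ #|W| = 4.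
Proof.
move=> wc_le_wr; have [A cardA] := ord_set_card2 wr_gt1.
(* v_(i,1) and v_(i,j2) must meet the same child checks of branch i: for w_r > 2
   take j2 = 2; for w_r = 2 we have w_c = 2, so v_(i,0) has a single child
   check and j2 = 0 works. *)
pose j2 := if wr == 2 then 0 else 2.
have j2_le : j2 <= Lsz wc wr by rewrite /j2 /Lsz; case: eqP => // wr2; nia.
pose J : {set 'I_(Lsz wc wr).+1} := [set inord 1; inord j2].
have cardJ : #|J| = 2.
  by rewrite cards2 -(inj_eq val_inj) /= !inordK ?ltnS ?Lsz_gt0 // /j2; case: ifP.
have touchJ (k : 'I_wc.-1) : {in J, forall j : 'I_(Lsz wc wr).+1,
    (j == 0 :> nat) || (j.-1 %/ wr.-1 == k) = (k == 0 :> nat)}.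
  move=> j; rewrite !inE => /orP[] /eqP-> /=; rewrite inordK ?ltnS ?Lsz_gt0 // ?div0n.
    by rewrite eq_sym.
  rewrite /j2; case: (wr =P 2) => [wr2|/eqP wr2] /=.
    have wc2 : wc = 2 by apply/anti_leq; rewrite wc_gt1 -wr2 wc_le_wr.
    have : k < 1 by apply: leq_trans (ltn_ord k) _; rewrite wc2.
    by rewrite ltnS leqn0 => /eqP->.
  rewrite divn_small; first by rewrite eq_sym.
  by rewrite -subn1 ltn_subRL addn1 ltn_neqAle eq_sym wr2.
exists (setX A J); split; last by rewrite cardsX cardA cardJ.
apply: codeword0_setX; rewrite ?cardA ?cardJ // => k j j' jJ j'J.
by rewrite !touchJ.
Qed.

Lemma exists_codeword_card_exp s : wc <= wr ->
  exists W, is_codeword (adj_ s) W /\ #|W| = 2 ^ s.+2.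
Proof.
move=> wc_le_wr; have [A cardA] := ord_set_card2 wr_gt1.
elim: s => [|s [W [hW cardW]]]; first exact: exists_codeword0_card4.
exists (setX A W); split; first by apply: codeword_setX; rewrite // cardA.
by rewrite cardsX cardA cardW expnS.
Qed.

End Hreg.

Theorem proposition2 (wc wr : nat) :
  2 <= wc -> wc <= wr ->
  girth_is (@Hedge wc wr) 8 /\ dmin_is (@Hadj wc wr) (2 ^ wc).
Proof.
move=> wc_gt1 wc_le_wr; have wr_gt1 : 1 < wr := leq_trans wc_gt1 wc_le_wr.
split.
  apply: tanner_girth8; [exact: adj_no_4cycle | exact: adj_no_6cycle | exact: adj_has_8cycle].
have -> : 2 ^ wc = 2 ^ (wc - 2).+2 by rewrite -[(wc - 2).+2]addn2 subnK.
split.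
  have [W [hW cardW]] := exists_codeword_card_exp wc_gt1 wr_gt1 (wc - 2) wc_le_wr.
  by exists W; rewrite -card_gt0 cardW expn_gt0.
by move=> S; apply: codeword_card_ge_exp.
Qed.
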